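(* Let $A\in\mathbb R^{m\times n}$, $D\in\mathbb R^{r\times n}$, $a\in\mathbb R^m$, $\lambda,\mu\in\mathbb R^r$ with $\lambda,\mu>0$, and let $\Omega$ be either $\mathbb R^n_+$ or $\{x:0\le x\le\gamma\}$ for some $\gamma\in\mathbb R^n$ with $\gamma>0$. Then the primal problem $$\min_{x\in\Omega}\ \tfrac12\|Ax-a\|^2+\sum_{i=1}^r\lambda_i\mathbf 1_{\{(Dx)_i\neq0\}}$$ has a global minimizer, and the corresponding dual problem has a global minimizer, where the dual problem is $$\min_{y\in\mathbb R^m,z\in\mathbb R^r}\ \big\langle\max\{-A^\top y-D^\top z,0\},\gamma\big\rangle+\tfrac12\|y\|^2+\langle a,y\rangle+\Psi_{0,\mu}(z)$$ when $\Omega=\{x:0\le x\le\gamma\}$ (max taken componentwise), and $$\min_{y\in\mathbb R^m,z\in\mathbb R^r}\ \tfrac12\|y\|^2+\langle a,y\rangle+\Psi_{0,\mu}(z)\quad\text{s.t.}\quad A^\top y+D^\top z\ge0$$ when $\Omega=\mathbb R^n_+$.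
   Context: $\Psi_{0,\mu}(z)=\sum_{i=1}^r\mu_i\mathbf 1_{\{z_i\ne0\}}$, where $\mathbf 1_{\{\cdot\}}$ is $1$ if the condition holds and $0$ otherwise. Vector inequalities are componentwise. *)

From mathcomp Require Import all_boot all_order all_algebra.
From mathcomp Require Import reals.
Set Implicit Arguments. Unset Strict Implicit. Unset Printing Implicit Defensive.
Import Order.TTheory GRing.Theory Num.Theory.
Local Open Scope ring_scope.

Section Defs.
Variable R : realType.

Definition dotv (k : nat) (u v : 'cV[R]_k) : R := \sum_(i < k) u i 0 * v i 0.
Definition sqnorm (k : nat) (u : 'cV[R]_k) : R := dotv u u.

Definition vle (k : nat) (u v : 'cV[R]_k) : Prop := forall i, u i 0 <= v i 0.
Definition vlt (k : nat) (u v : 'cV[R]_k) : Prop := forall i, u i 0 < v i 0.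

Definition vpos (k : nat) (u : 'cV[R]_k) : 'cV[R]_k := \col_i Num.max (u i 0) 0.

Definition Psi0 (r : nat) (mu z : 'cV[R]_r) : R :=
  \sum_(i < r) mu i 0 * (z i 0 != 0)%:R.

Definition primal_obj (m n r : nat) (A : 'M[R]_(m, n)) (D : 'M[R]_(r, n))
  (a : 'cV[R]_m) (lambda : 'cV[R]_r) (x : 'cV[R]_n) : R :=
  2^-1 * sqnorm (A *m x - a) + Psi0 lambda (D *m x).

Definition dual_obj_box (m n r : nat) (A : 'M[R]_(m, n)) (D : 'M[R]_(r, n))
  (a : 'cV[R]_m) (mu : 'cV[R]_r) (gamma : 'cV[R]_n) (y : 'cV[R]_m) (z : 'cV[R]_r) : R :=
  dotv (vpos (- (A^T *m y) - D^T *m z)) gamma + 2^-1 * sqnorm y + dotv a y + Psi0 mu z.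

(* dual objective for Omega = R^n_+ (constraint A^T y + D^T z >= 0 imposed separately) *)
Definition dual_obj_nonneg (m r : nat) (a : 'cV[R]_m) (mu : 'cV[R]_r)
  (y : 'cV[R]_m) (z : 'cV[R]_r) : R :=
  2^-1 * sqnorm y + dotv a y + Psi0 mu z.

Definition has_global_min (T : Type) (S : T -> Prop) (f : T -> R) : Prop :=
  exists x, S x /\ forall x', S x' -> f x <= f x'.

End Defs.

From mathcomp Require Import all_boot all_order all_algebra.
From mathcomp Require Import reals.
From mathcomp Require Import ring lra.
From Stdlib Require Import Classical.
Import Order.TTheory GRing.Theory Num.Theory.
Local Open Scope ring_scope.
Set Implicit Arguments. Unset Strict Implicit. Unset Printing Implicit Defensive.

(* Each of the four problems minimizes a convex quadratic [F] plus
   [Psi0 lam (L *m w)] over a polyhedron; for the box dual one adds a slack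
   variable [s >= max{- A^T y - D^T z, 0}] with cost [dotv gamma s].  Fixing
   the support of [L *m w] leaves finitely many convex quadratic programs, and
   the best of their minimizers is a global minimizer.  A convex quadratic that
   is bounded below on a nonempty polyhedron attains its infimum (Frank-Wolfe),
   by induction on the dimension: from a feasible point, moving along a fixed
   direction [d] to the minimum of [F] on that line, or until the polyhedron is
   left, never increases [F] and ends on one of finitely many hyperplanes, on
   each of which the problem has one dimension less. *)

Section InnerProduct.
Variable R : realType.
Implicit Types k l : nat.

Lemma dotvE k (u v : 'cV[R]_k) : dotv u v = (u^T *m v) 0 0.
Proof. by rewrite /dotv mxE; apply: eq_bigr => i _; rewrite mxE. Qed.

Lemma dotvC k (u v : 'cV[R]_k) : dotv u v = dotv v u.
Proof. by apply: eq_bigr => i _; rewrite mulrC. Qed.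

Lemma dotvDr k (u v w : 'cV[R]_k) : dotv u (v + w) = dotv u v + dotv u w.
Proof. by rewrite /dotv -big_split; apply: eq_bigr => i _; rewrite mxE mulrDr. Qed.

Lemma dotvDl k (u v w : 'cV[R]_k) : dotv (v + w) u = dotv v u + dotv w u.
Proof. by rewrite dotvC dotvDr !(dotvC u). Qed.

Lemma dotvZr k (t : R) (u v : 'cV[R]_k) : dotv u (t *: v) = t * dotv u v.
Proof. by rewrite /dotv mulr_sumr; apply: eq_bigr => i _; rewrite mxE mulrCA. Qed.

Lemma dotv0l k (u : 'cV[R]_k) : dotv 0 u = 0.
Proof. by rewrite /dotv big1 // => i _; rewrite mxE mul0r. Qed.

Lemma dotv_mulmx k l (u : 'cV[R]_k) (B : 'M[R]_(k, l)) (w : 'cV[R]_l) :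
  dotv u (B *m w) = dotv (B^T *m u) w.
Proof. by rewrite !dotvE trmx_mul trmxK mulmxA. Qed.

Lemma dotv_row q k (G : 'M[R]_(q, k)) j w : dotv (row j G)^T w = (G *m w) j 0.
Proof. by rewrite dotvE trmxK -row_mul mxE. Qed.

Lemma dotv_delta k (g : 'cV[R]_k) i : dotv g (delta_mx i 0) = g i 0.
Proof.
rewrite /dotv (bigD1 i) //= !mxE !eqxx mulr1 big1 ?addr0 // => j /negbTE nji.
by rewrite !mxE nji mulr0.
Qed.

Lemma dotv_le k (u u' g : 'cV[R]_k) : vle u u' -> vle 0 g -> dotv u g <= dotv u' g.
Proof.
move=> le_uu' g_ge0; apply: ler_sum => i _; apply: ler_wpM2r (le_uu' i).
by have := g_ge0 i; rewrite mxE.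
Qed.

Lemma sqnorm_ge0 k (u : 'cV[R]_k) : 0 <= sqnorm u.
Proof. by apply: sumr_ge0 => i _; rewrite -expr2 sqr_ge0. Qed.

Lemma sqnorm_eq0 k (u : 'cV[R]_k) : sqnorm u = 0 -> u = 0.
Proof.
move=> u0; apply/matrixP => i j; rewrite (ord1 j) mxE.
have sq_ge0 i' : predT i' -> 0 <= u i' 0 * u i' 0 by rewrite -expr2 sqr_ge0.
have := psumr_eq0P sq_ge0 u0 (i := i) isT.
by move/eqP; rewrite mulf_eq0 orbb => /eqP.
Qed.

Lemma sqnormD k (u v : 'cV[R]_k) :
  sqnorm (u + v) = sqnorm u + 2 * dotv u v + sqnorm v.
Proof. by rewrite /sqnorm !dotvDr !dotvDl (dotvC v u); ring. Qed.

Lemma sqnormZ k (t : R) (u : 'cV[R]_k) : sqnorm (t *: u) = t ^+ 2 * sqnorm u.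
Proof. by rewrite /sqnorm dotvZr dotvC dotvZr mulrA -expr2. Qed.

Lemma sqnorm_add_dotv_ge k (a y : 'cV[R]_k) :
  - (2^-1 * sqnorm a) <= 2^-1 * sqnorm y + dotv a y.
Proof. by have := sqnorm_ge0 (y + a); rewrite sqnormD (dotvC y a); lra. Qed.

Lemma vpos_ge0 k (u : 'cV[R]_k) : vle 0 (vpos u).
Proof. by move=> i; rewrite !mxE le_max lexx orbT. Qed.

Lemma vpos_ge k (u : 'cV[R]_k) : vle u (vpos u).
Proof. by move=> i; rewrite !mxE le_max lexx. Qed.

Lemma vpos_le k (u s : 'cV[R]_k) : vle 0 s -> vle u s -> vle (vpos u) s.
Proof. by move=> s_ge0 le_us i; rewrite !mxE ge_max le_us; have := s_ge0 i; rewrite mxE. Qed.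

End InnerProduct.

Section Minimizers.
Variable R : realType.

Definition bounded_below (T : Type) (S : T -> Prop) (f : T -> R) : Prop :=
  exists L, forall x, S x -> L <= f x.

Lemma has_global_min_transfer (T U : Type) (S : T -> Prop) (f : T -> R)
    (S' : U -> Prop) (f' : U -> R) (pi : U -> T) :
  has_global_min S' f' ->
  (forall u, S' u -> S (pi u) /\ f (pi u) <= f' u) ->
  (forall x, S x -> exists2 u, S' u & f' u <= f x) ->
  has_global_min S f.
Proof.
move=> [u [S'u min_u]] proj lift; have [Spiu le_piu] := proj u S'u.
exists (pi u); split => // x /lift [u' S'u' le_u'x].
exact: le_trans le_piu (le_trans (min_u u' S'u') le_u'x).
Qed.

Lemma has_global_min_sigma (I : eqType) (T : Type) (s : seq I)
    (S : I -> T -> Prop) (f : I -> T -> R) :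
  (forall i, i \in s -> (exists x, S i x) -> has_global_min (S i) (f i)) ->
  (exists i x, i \in s /\ S i x) ->
  has_global_min (fun ix : I * T => ix.1 \in s /\ S ix.1 ix.2)
                 (fun ix => f ix.1 ix.2).
Proof.
elim: s => [|i s IH] min_s [j [x [js Sjx]]] //.
have min_tl j' : j' \in s -> (exists x, S j' x) -> has_global_min (S j') (f j').
  by move=> j's; apply: min_s; rewrite inE j's orbT.
have [ne_tl|empty_tl] := classic (exists j x, j \in s /\ S j x); last first.
  have ne_i : exists x, S i x.
    by move: js; rewrite inE => /predU1P[<-|js]; [exists x | case: empty_tl; exists j, x].
  have [x0 [Sx0 min_x0]] := min_s i (mem_head _ _) ne_i.
  exists (i, x0); split; first by split; first exact: mem_head.
  move=> [j' y] /= [/predU1P[->|j's] Sy]; first exact: min_x0.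
  by case: empty_tl; exists j', y.
have [[i1 x1] [[/= i1s Sx1] min_x1]] := IH min_tl ne_tl.
have in_tl j' y : j' \in s -> S j' y -> f i1 x1 <= f j' y.
  by move=> j's Sy; exact: (min_x1 (j', y)).
have [ne_i|empty_i] := classic (exists x, S i x); last first.
  exists (i1, x1); split; first by split; rewrite // inE i1s orbT.
  move=> [j' y] /= [/predU1P[->|j's] Sy]; last exact: in_tl.
  by case: empty_i; exists y.
have [x0 [Sx0 min_x0]] := min_s i (mem_head _ _) ne_i.
have [le10|/ltW le01] := leP (f i1 x1) (f i x0).
  exists (i1, x1); split; first by split; rewrite // inE i1s orbT.
  move=> [j' y] /= [/predU1P[->|j's] Sy]; last exact: in_tl.
  exact: le_trans le10 (min_x0 y Sy).
exists (i, x0); split; first by split; first exact: mem_head.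
move=> [j' y] /= [/predU1P[->|j's] Sy]; first exact: min_x0.
exact: le_trans le01 (in_tl j' y j's Sy).
Qed.

End Minimizers.

Section Polyhedra.
Variable R : realType.
Implicit Types k q : nat.

Definition polyhedral k (S : 'cV[R]_k -> Prop) : Prop :=
  exists q (G : 'M[R]_(q, k)) (h : 'cV[R]_q), forall w, S w <-> vle (G *m w) h.

Lemma polyhedral_ext k (S S' : 'cV[R]_k -> Prop) :
  (forall w, S w <-> S' w) -> polyhedral S -> polyhedral S'.
Proof. by move=> SS' [q [G [h defS]]]; exists q, G, h => w; rewrite -SS'. Qed.

Lemma polyhedral_le k q (G : 'M[R]_(q, k)) h : polyhedral (fun w => vle (G *m w) h).
Proof. by exists q, G, h. Qed.

Lemma polyhedral_ge k q (G : 'M[R]_(q, k)) h : polyhedral (fun w => vle h (G *m w)).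
Proof.
apply: polyhedral_ext (polyhedral_le (- G) (- h)) => w.
by rewrite mulNmx; split=> le_w i; move: (le_w i); rewrite !mxE lerN2.
Qed.

Lemma polyhedralI k (S1 S2 : 'cV[R]_k -> Prop) :
  polyhedral S1 -> polyhedral S2 -> polyhedral (fun w => S1 w /\ S2 w).
Proof.
move=> [q1 [G1 [h1 defS1]]] [q2 [G2 [h2 defS2]]].
exists (q1 + q2)%N, (col_mx G1 G2), (col_mx h1 h2) => w.
rewrite defS1 defS2 mul_col_mx; split.
  move=> [le1 le2] i; case: (split_ordP i) => j ->;
    rewrite ?col_mxEu ?col_mxEd; [exact: le1 | exact: le2].
move=> le12; split=> j; [move: (le12 (lshift q2 j)) | move: (le12 (rshift q1 j))];
  by rewrite ?col_mxEu ?col_mxEd.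
Qed.

Lemma polyhedral_eq k q (G : 'M[R]_(q, k)) h : polyhedral (fun w => G *m w = h).
Proof.
apply: polyhedral_ext (polyhedralI (polyhedral_le G h) (polyhedral_ge G h)) => w.
split=> [[le_Gh le_hG]|->]; last by split=> i.
by apply/matrixP => i j; rewrite (ord1 j); apply/eqP; rewrite eq_le le_Gh le_hG.
Qed.

Lemma polyhedral_affine k l (S : 'cV[R]_k -> Prop) (w0 : 'cV[R]_k) (B : 'M[R]_(k, l)) :
  polyhedral S -> polyhedral (fun u => S (w0 + B *m u)).
Proof.
move=> [q [G [h defS]]]; exists q, (G *m B), (h - G *m w0) => u.
rewrite defS mulmxDr -mulmxA.
by split=> le_u i; move: (le_u i); rewrite !mxE; lra.
Qed.

Lemma polyhedral_ker_rows k r (S : 'cV[R]_k -> Prop) (L : 'M[R]_(r, k)) (P : pred 'I_r) :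
  polyhedral S -> polyhedral (fun w => S w /\ forall i, P i -> (L *m w) i 0 = 0).
Proof.
pose LP := \matrix_(i, j) ((P i)%:R * L i j).
have LPE (w : 'cV[R]_k) i : (LP *m w) i 0 = (P i)%:R * (L *m w) i 0.
  by rewrite !mxE mulr_sumr; apply: eq_bigr => j _; rewrite mxE mulrA.
move=> polS; apply: polyhedral_ext (polyhedralI polS (polyhedral_eq LP 0)) => w.
split=> -[Sw LPw]; split=> //.
  move=> i Pi; have /matrixP/(_ i 0) := LPw.
  by rewrite LPE Pi mul1r => ->; rewrite mxE.
apply/matrixP => i j; rewrite (ord1 j) LPE.
by case: (boolP (P i)) => [/LPw ->|_]; rewrite ?mulr0 ?mul0r mxE.
Qed.

Lemma polyhedral_exit k q (G : 'M[R]_(q, k)) h w d :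
  vle (G *m w) h -> ~ vle (G *m (w + d)) h ->
  exists s (j : 'I_q), [/\ 0 <= s < 1, 0 < (G *m d) j 0,
     vle (G *m (w + s *: d)) h & (G *m (w + s *: d)) j 0 = h j 0].
Proof.
move=> Sw /not_all_ex_not [i0 /negP]; rewrite -ltNge mulmxDr mxE => lt_i0.
have Gd_i0 : 0 < (G *m d) i0 0 by have := Sw i0; lra.
have GwsdE s i : (G *m (w + s *: d)) i 0 = (G *m w) i 0 + s * (G *m d) i 0.
  by rewrite mulmxDr -scalemxAr !mxE.
pose ratio i := (h i 0 - (G *m w) i 0) / (G *m d) i 0.
case: (arg_minP ratio (P := fun i => 0 < (G *m d) i 0) Gd_i0) => j Gd_j min_j.
have ratio_j : ratio j * (G *m d) j 0 = h j 0 - (G *m w) j 0.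
  by rewrite mulfVK // gt_eqF.
have ratio_ge0 : 0 <= ratio j by rewrite divr_ge0 // ?subr_ge0 // ltW.
exists (ratio j), j; split => //.
- rewrite ratio_ge0; apply: le_lt_trans (min_j i0 Gd_i0) _.
  by rewrite ltr_pdivrMr // mul1r; lra.
- move=> i; rewrite GwsdE; have := Sw i.
  have [Gd_i|] := ltP 0 ((G *m d) i 0); last by nra.
  by have := min_j i Gd_i; rewrite /= {2}/ratio ler_pdivlMr //; lra.
- by rewrite GwsdE ratio_j; lra.
Qed.

Lemma polyhedral_segment k q (G : 'M[R]_(q, k)) h (P : 'cV[R]_k -> Prop) w d :
  vle (G *m w) h -> (forall s, 0 <= s <= 1 -> P (w + s *: d)) ->
  exists y, [/\ vle (G *m y) h, P y &
                y = w + d \/ exists j, row j G != 0 /\ (G *m y) j 0 = h j 0].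
Proof.
move=> Sw Pseg; have [Swd|/(polyhedral_exit Sw)] := classic (vle (G *m (w + d)) h).
  exists (w + d); split; [exact: Swd | | by left].
  by rewrite -[d]scale1r; apply: Pseg; rewrite ler01 lexx.
move=> [s [j [/andP[s_ge0 s_lt1] Gd_j Sy Gy_j]]].
exists (w + s *: d); split => //; first by apply: Pseg; rewrite s_ge0 ltW.
right; exists j; split => //; apply: contraTneq Gd_j => Gj0.
have -> : (G *m d) j 0 = (row j G *m d) 0 0 by rewrite -row_mul !mxE.
by rewrite Gj0 mul0mx mxE ltxx.
Qed.

End Polyhedra.

Section ConvexQuadratic.
Variable R : realType.
Implicit Types k l p : nat.

Definition quadratic k p (M : 'M[R]_(p, k)) (v : 'cV[R]_p) (c : 'cV[R]_k) (e : R)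
    (w : 'cV[R]_k) : R :=
  2^-1 * sqnorm (M *m w + v) + dotv c w + e.

Definition convex_quadratic k (F : 'cV[R]_k -> R) : Prop :=
  exists p (M : 'M[R]_(p, k)) v c e, F =1 quadratic M v c e.

Lemma quadratic_line k p (M : 'M[R]_(p, k)) v c e w d (u : R) :
  quadratic M v c e (w + u *: d) = quadratic M v c e w
    + u * (dotv (M^T *m (M *m d)) w + dotv (M *m d) v + dotv c d)
    + 2^-1 * u ^+ 2 * sqnorm (M *m d).
Proof.
rewrite /quadratic mulmxDr -scalemxAr (addrAC _ (u *: _)) sqnormD sqnormZ.
rewrite dotvZr dotvDl dotvDr dotvZr -dotv_mulmx !(dotvC (M *m d)).
by field.
Qed.

Lemma convex_quadratic_affine k l (F : 'cV[R]_k -> R) (w0 : 'cV[R]_k) (B : 'M[R]_(k, l)) :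
  convex_quadratic F -> convex_quadratic (fun u => F (w0 + B *m u)).
Proof.
move=> [p [M [v [c [e defF]]]]].
exists p, (M *m B), (M *m w0 + v), (B^T *m c), (dotv c w0 + e) => u.
rewrite defF /quadratic mulmxDr dotvDr dotv_mulmx mulmxA (addrC (M *m w0)) !addrA.
by ring.
Qed.

Lemma convex_quadratic_addr k (F : 'cV[R]_k -> R) (a : R) :
  convex_quadratic F -> convex_quadratic (fun w => F w + a).
Proof.
move=> [p [M [v [c [e defF]]]]]; exists p, M, v, c, (e + a) => w.
by rewrite defF /quadratic addrA.
Qed.

Definition on_hyperplane k (hp : 'cV[R]_k * R) (y : 'cV[R]_k) : Prop :=
  hp.1 != 0 /\ dotv hp.1 y = hp.2.

(* Solve [dotv g w = b] for the coordinate [i] with [g i 0 != 0]; the other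
   coordinates are the parameters. *)
Lemma hyperplane_param n (g : 'cV[R]_n.+1) (b : R) : g != 0 ->
  exists (w0 : 'cV[R]_n.+1) (B : 'M[R]_(n.+1, n)),
    forall w, dotv g w = b <-> exists u, w = w0 + B *m u.
Proof.
case/matrix0Pn => i [j]; rewrite (ord1 j) => g_i {j}.
pose B : 'M[R]_(n.+1, n) := \matrix_(a, l)
  (if a == i then - g (lift i l) 0 / g i 0 else (a == lift i l)%:R).
exists ((b / g i 0) *: delta_mx i 0), B => w; split => [<-|[u ->]].
  exists (\col_l w (lift i l) 0); apply/matrixP => a z; rewrite (ord1 z) {z} !mxE.
  case: (unliftP i a) => [l ->|->].
    rewrite eq_sym (negbTE (neq_lift _ _)) mulr0 add0r (bigD1 l) //= !mxE.
    rewrite eq_sym (negbTE (neq_lift _ _)) eqxx mul1r big1 ?addr0 // => l' l'l.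
    by rewrite !mxE eq_sym (negbTE (neq_lift _ _)) (inj_eq lift_inj) eq_sym (negbTE l'l) mul0r.
  rewrite !eqxx mulr1 /dotv (bigD1_ord i) //=.
  rewrite [X in _ + X](_ : _ = - (\sum_l g (lift i l) 0 * w (lift i l) 0) / g i 0).
    by field.
  rewrite mulNr mulr_suml -sumrN; apply: eq_bigr => l _; rewrite !mxE eqxx.
  by field.
have Bg0 : B^T *m g = 0.
  apply/matrixP => l z; rewrite (ord1 z) {z} !mxE (bigD1_ord i) //= !mxE eqxx.
  rewrite (bigD1 l) //= !mxE eq_sym (negbTE (neq_lift _ _)) eqxx mul1r big1.
    by rewrite addr0 divfK // addNr.
  move=> l' l'l; rewrite !mxE eq_sym (negbTE (neq_lift _ _)).
  by rewrite (inj_eq lift_inj) (negbTE l'l) mul0r.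
by rewrite dotvDr dotvZr dotv_delta divfK // dotv_mulmx Bg0 dotv0l addr0.
Qed.

Lemma has_min_on_hyperplane n (F : 'cV[R]_n.+1 -> R) (S : 'cV[R]_n.+1 -> Prop) hp :
  (forall (F' : 'cV[R]_n -> R) (S' : 'cV[R]_n -> Prop), convex_quadratic F' ->
     polyhedral S' -> (exists u, S' u) -> bounded_below S' F' -> has_global_min S' F') ->
  convex_quadratic F -> polyhedral S -> bounded_below S F ->
  (exists y, S y /\ on_hyperplane hp y) ->
  has_global_min (fun y => S y /\ on_hyperplane hp y) F.
Proof.
move=> min_n quadF polS [L lbF] [y0 [Sy0 [g0 Hy0]]].
have [w0 [B paramH]] := hyperplane_param hp.2 g0.
pose phi u := w0 + B *m u.
apply: (has_global_min_transfer (pi := phi) (min_n (F \o phi) (S \o phi) _ _ _ _)).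
- exact: convex_quadratic_affine.
- exact: polyhedral_affine.
- by have [u Ey0] := (paramH y0).1 Hy0; exists u; rewrite /= /phi -Ey0.
- by exists L => u /lbF.
- by move=> u Su; split; [split; [|split; [|apply/paramH; exists u]] | ].
- by move=> y [Sy [_ /paramH [u Ey]]]; exists u; rewrite /= /phi -Ey.
Qed.

Section Descent.
Variables (k p q : nat) (G : 'M[R]_(q, k)) (h : 'cV[R]_q).
Variables (M : 'M[R]_(p, k)) (v : 'cV[R]_p) (c d : 'cV[R]_k) (e : R).
Local Notation F := (quadratic M v c e).

(* The hyperplane through 0 orthogonal to [d], the hyperplane where [F] is
   stationary along [d], and the hyperplanes supporting the facets of
   [vle (G *m w) h]. *)
Definition descent_hyperplanes : seq ('cV[R]_k * R) :=
  (d, 0) :: (M^T *m (M *m d), - (dotv (M *m d) v + dotv c d))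
  :: [seq ((row j G)^T, h j 0) | j <- enum 'I_q].

Lemma descend_along w dd :
  vle (G *m w) h -> (forall s, 0 <= s <= 1 -> F (w + s *: dd) <= F w) ->
  (vle (G *m (w + dd)) h ->
     exists2 hp, hp \in descent_hyperplanes & on_hyperplane hp (w + dd)) ->
  exists y, [/\ vle (G *m y) h, F y <= F w &
                exists2 hp, hp \in descent_hyperplanes & on_hyperplane hp y].
Proof.
move=> Sw descent target.
have [y [Sy Fy on_y]] := polyhedral_segment (P := fun y => F y <= F w) Sw descent.
exists y; split => //; case: on_y => [Ey|[j [Gj0 Gy_j]]].
  by rewrite Ey in Sy *; exact: target.
exists ((row j G)^T, h j 0).
  by rewrite !inE map_f ?mem_enum ?orbT.
by split; rewrite /= ?trmx_eq0 ?dotv_row.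
Qed.

(* If [F] is strictly convex along [d], aim at its minimum on the line; if it is
   constant, aim at [dotv d y = 0]; otherwise go so far that [F] would drop
   below its lower bound [L], so that the segment must leave the polyhedron. *)
Lemma descend_to_hyperplane L w : d != 0 ->
  (forall y, vle (G *m y) h -> L <= F y) -> vle (G *m w) h ->
  exists y, [/\ vle (G *m y) h, F y <= F w &
                exists2 hp, hp \in descent_hyperplanes & on_hyperplane hp y].
Proof.
move=> d0 lbF Sw; have Fline := quadratic_line M v c e w d.
set g := M^T *m (M *m d) in Fline *; set al := sqnorm (M *m d) in Fline *.
set be := _ + dotv c d in Fline.
have gd : dotv g d = al by rewrite -dotv_mulmx.
have [al_gt0|al_le0] := ltP 0 al.
  pose t := - be / al; have tal : t * al = - be by rewrite mulfVK ?gt_eqF.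
  apply: (descend_along (dd := t *: d) Sw).
    move=> s /andP[s_ge0 s_le1]; rewrite scalerA Fline -[be]opprK -tal.
    have ta_ge0 : 0 <= t ^+ 2 * al by rewrite mulr_ge0 ?sqr_ge0 ?ltW.
    have : 0 <= t ^+ 2 * al * (s * (1 - 2^-1 * s)).
      by rewrite mulr_ge0 // mulr_ge0 //; lra.
    nra.
  move=> _; exists (g, - (dotv (M *m d) v + dotv c d)); first by rewrite !inE eqxx orbT.
  split; first by apply: contraTneq al_gt0 => /= g0; rewrite -gd g0 dotv0l ltxx.
  by rewrite /= dotvDr dotvZr gd tal /be; lra.
have Md0 : M *m d = 0 by apply: sqnorm_eq0; apply/eqP; rewrite eq_le al_le0 sqnorm_ge0.
have Fline0 u : F (w + u *: d) = F w + u * dotv c d.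
  by rewrite Fline /be /al /g Md0 mulmx0 !dotv0l /sqnorm dotv0l; ring.
have [cd0|cd_neq0] := eqVneq (dotv c d) 0.
  have dd_neq0 : sqnorm d != 0 by apply: contra_neq d0; exact: sqnorm_eq0.
  apply: (descend_along (dd := (- dotv d w / sqnorm d) *: d) Sw).
    by move=> s _; rewrite scalerA Fline0 cd0 mulr0 addr0.
  move=> _; exists (d, 0); first exact: mem_head.
  by split=> //=; rewrite dotvDr dotvZr -/(sqnorm d) divfK // addrN.
have lbFw := lbF w Sw.
apply: (descend_along (dd := (- (F w - L + 1) / dotv c d) *: d) Sw).
  move=> s /andP[s_ge0 _]; rewrite scalerA Fline0 -mulrA divfK //.
  by nra.
by move=> /lbF; rewrite Fline0 divfK //; lra.
Qed.

End Descent.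

Theorem frank_wolfe k (F : 'cV[R]_k -> R) (S : 'cV[R]_k -> Prop) :
  convex_quadratic F -> polyhedral S -> (exists w, S w) -> bounded_below S F ->
  has_global_min S F.
Proof.
elim: k F S => [|n IH] F S quadF polS [w0 Sw0] lbF.
  by exists w0; split => // w _; rewrite (_ : w = w0) //; apply/matrixP => -[].
have [[q [G [h defS]]] [p [M [v [c [e defF]]]]]] := (polS, quadF).
pose d : 'cV[R]_n.+1 := delta_mx 0 0.
have d0 : d != 0 by apply/matrix0Pn; exists 0, 0; rewrite mxE !eqxx oner_eq0.
have descend w : S w -> exists y, [/\ S y, F y <= F w &
    exists2 hp, hp \in descent_hyperplanes G h M v c d & on_hyperplane hp y].
  move=> /defS Sw; have [L lbF'] := lbF.
  have lbQ y : vle (G *m y) h -> L <= quadratic M v c e y.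
    by move=> /defS /lbF'; rewrite defF.
  have [y [Sy Fy onH]] := descend_to_hyperplane d0 lbQ Sw.
  by exists y; split; [apply/defS | rewrite !defF | ].
apply: (has_global_min_transfer (pi := snd) (has_global_min_sigma
  (s := descent_hyperplanes G h M v c d) (S := fun hp y => S y /\ on_hyperplane hp y)
  (f := fun _ => F) _ _)).
- by move=> hp _; exact: has_min_on_hyperplane.
- by have [y [Sy _ [hp hp_in onH]]] := descend w0 Sw0; exists hp, y.
- by move=> [hp y] [_ []].
- by move=> w /descend [y [Sy Fy [hp hp_in onH]]]; exists (hp, y).
Qed.

End ConvexQuadratic.

Section SparseQuadraticPrograms.
Variable R : realType.

Lemma Psi0_support r (lam z : 'cV[R]_r) :
  Psi0 lam z = \sum_(i in [set i | z i 0 != 0]) lam i 0.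
Proof.
rewrite /Psi0 [RHS]big_mkcond /=; apply: eq_bigr => i _; rewrite inE.
by case: (z i 0 != 0); rewrite ?mulr1 ?mulr0.
Qed.

Lemma Psi0_le_sum r (lam z : 'cV[R]_r) (T : {set 'I_r}) :
  vle 0 lam -> (forall i, i \notin T -> z i 0 = 0) ->
  Psi0 lam z <= \sum_(i in T) lam i 0.
Proof.
move=> lam_ge0 zT; rewrite /Psi0 [X in _ <= X]big_mkcond /=; apply: ler_sum => i _.
have := lam_ge0 i; rewrite mxE => lam_i.
case: ifP => [_|/negbT /zT ->]; last by rewrite eqxx mulr0.
by rewrite ler_piMr // lern1 leq_b1.
Qed.

(* On the piece where [L *m w] vanishes off [T], [Psi0 lam (L *m w)] is at most
   [sum_(i in T) lam_i], with equality when [T] is exactly the support. *)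
Theorem has_min_add_Psi0 N r (F : 'cV[R]_N -> R) (Om : 'cV[R]_N -> Prop)
    (L : 'M[R]_(r, N)) (lam : 'cV[R]_r) :
  convex_quadratic F -> polyhedral Om -> (exists w, Om w) -> bounded_below Om F ->
  vle 0 lam -> has_global_min Om (fun w => F w + Psi0 lam (L *m w)).
Proof.
move=> quadF polOm [w0 Omw0] [B lbF] lam_ge0.
pose supp (w : 'cV[R]_N) := [set i | (L *m w) i 0 != 0].
pose piece (T : {set 'I_r}) w := Om w /\ forall i, i \notin T -> (L *m w) i 0 = 0.
have piece_supp (w : 'cV[R]_N) : Om w -> piece (supp w) w.
  by move=> Omw; split=> // i; rewrite inE negbK => /eqP.
apply: (has_global_min_transfer (pi := snd) (has_global_min_sigma
  (s := enum {set 'I_r}) (S := piece) (f := fun T w => F w + \sum_(i in T) lam i 0) _ _)).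
- move=> T _ [w Tw]; apply: frank_wolfe.
  + exact: convex_quadratic_addr.
  + exact: polyhedral_ker_rows.
  + by exists w.
  + by exists (B + \sum_(i in T) lam i 0) => y [/lbF]; rewrite lerD2r.
- by exists (supp w0), w0; rewrite mem_enum; split => //; exact: piece_supp.
- by move=> [T w] /= [_ [Omw wT]]; split => //; rewrite lerD2l; exact: Psi0_le_sum.
- move=> w Omw; exists (supp w, w); first by split; [rewrite mem_enum | exact: piece_supp].
  by rewrite /= Psi0_support.
Qed.

End SparseQuadraticPrograms.

Section PrimalDual.
Variable R : realType.
Variables (m n r : nat) (A : 'M[R]_(m, n)) (D : 'M[R]_(r, n)) (a : 'cV[R]_m).

Lemma primal_has_min (lambda : 'cV[R]_r) (Om : 'cV[R]_n -> Prop) :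
  polyhedral Om -> Om 0 -> vle 0 lambda -> has_global_min Om (primal_obj A D a lambda).
Proof.
move=> polOm Om0 lam_ge0; apply: has_min_add_Psi0 => //.
- by exists m, A, (- a), 0, 0 => x; rewrite /quadratic dotv0l !addr0.
- by exists 0.
- by exists 0 => x _; rewrite mulr_ge0 ?invr_ge0 ?ler0n ?sqnorm_ge0.
Qed.

Lemma dual_nonneg_has_min (mu : 'cV[R]_r) : vle 0 mu ->
  has_global_min (fun yz : 'cV[R]_m * 'cV[R]_r => vle 0 (A^T *m yz.1 + D^T *m yz.2))
                 (fun yz => dual_obj_nonneg a mu yz.1 yz.2).
Proof.
move=> mu_ge0.
pose Y : 'M[R]_(m, m + r) := row_mx 1%:M 0.
pose Z : 'M[R]_(r, m + r) := row_mx 0 1%:M.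
have YE y z : Y *m col_mx y z = y by rewrite mul_row_col mul1mx mul0mx addr0.
have ZE y z : Z *m col_mx y z = z by rewrite mul_row_col mul1mx mul0mx add0r.
pose K := A^T *m Y + D^T *m Z.
have KE w : K *m w = A^T *m (Y *m w) + D^T *m (Z *m w) by rewrite mulmxDl !mulmxA.
apply: (has_global_min_transfer (pi := fun w => (Y *m w, Z *m w)) (has_min_add_Psi0
  (F := fun w => 2^-1 * sqnorm (Y *m w) + dotv a (Y *m w)) (Om := fun w => vle 0 (K *m w))
  Z _ _ _ _ mu_ge0)).
- by exists m, Y, 0, (Y^T *m a), 0 => w; rewrite /quadratic !addr0 dotv_mulmx.
- exact: polyhedral_ge.
- by exists 0; rewrite mulmx0 => i.
- by exists (- (2^-1 * sqnorm a)) => w _; exact: sqnorm_add_dotv_ge.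
- by move=> w; rewrite KE.
- by move=> [y z] /= Kyz; exists (col_mx y z); rewrite /= ?KE YE ZE.
Qed.

Lemma dual_box_has_min (mu : 'cV[R]_r) (gamma : 'cV[R]_n) : vle 0 mu -> vle 0 gamma ->
  has_global_min (fun _ : 'cV[R]_m * 'cV[R]_r => True)
                 (fun yz => dual_obj_box A D a mu gamma yz.1 yz.2).
Proof.
move=> mu_ge0 gamma_ge0.
pose Y : 'M[R]_(m, m + r + n) := row_mx (row_mx 1%:M 0) 0.
pose Z : 'M[R]_(r, m + r + n) := row_mx (row_mx 0 1%:M) 0.
pose Sl : 'M[R]_(n, m + r + n) := row_mx 0 1%:M.
have YE y z s : Y *m col_mx (col_mx y z) s = y.
  by rewrite !mul_row_col !mul1mx !mul0mx !addr0.
have ZE y z s : Z *m col_mx (col_mx y z) s = z.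
  by rewrite !mul_row_col !mul1mx !mul0mx add0r addr0.
have SlE y z s : Sl *m col_mx (col_mx y z) s = s.
  by rewrite !mul_row_col mul1mx mul0mx add0r.
pose K := A^T *m Y + D^T *m Z + Sl.
have KE w : K *m w = A^T *m (Y *m w) + D^T *m (Z *m w) + Sl *m w.
  by rewrite !mulmxDl !mulmxA.
apply: (has_global_min_transfer (pi := fun w => (Y *m w, Z *m w)) (has_min_add_Psi0
  (F := fun w => 2^-1 * sqnorm (Y *m w) + dotv a (Y *m w) + dotv gamma (Sl *m w))
  (Om := fun w => vle 0 (Sl *m w) /\ vle 0 (K *m w)) Z _ _ _ _ mu_ge0)).
- exists m, Y, 0, (Y^T *m a + Sl^T *m gamma), 0 => w.
  by rewrite /quadratic !addr0 dotvDl -!dotv_mulmx addrA.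
- exact: polyhedralI (polyhedral_ge _ _) (polyhedral_ge _ _).
- by exists 0; rewrite !mulmx0; split=> i.
- exists (- (2^-1 * sqnorm a)) => w [s_ge0 _].
  have := dotv_le s_ge0 gamma_ge0; rewrite dotv0l dotvC.
  have := sqnorm_add_dotv_ge a (Y *m w); lra.
- move=> w [s_ge0]; rewrite KE => feas; split=> //=.
  suff : dotv (vpos (- (A^T *m (Y *m w)) - D^T *m (Z *m w))) gamma <= dotv gamma (Sl *m w).
    by rewrite /dual_obj_box; lra.
  rewrite (dotvC gamma); apply: dotv_le (vpos_le s_ge0 _) gamma_ge0 => i.
  by have := feas i; rewrite !mxE; lra.
- move=> [y z] _; pose s := vpos (- (A^T *m y) - D^T *m z).
  exists (col_mx (col_mx y z) s); rewrite /= ?KE YE ZE SlE.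
    split=> [|i]; first exact: vpos_ge0.
    by have := vpos_ge (- (A^T *m y) - D^T *m z) i; rewrite !mxE; lra.
  by rewrite /dual_obj_box (dotvC gamma); lra.
Qed.

End PrimalDual.

Theorem mainTheorem9 (R : realType) (m n r : nat)
  (A : 'M[R]_(m, n)) (D : 'M[R]_(r, n)) (a : 'cV[R]_m) (lambda mu : 'cV[R]_r)
  (hlam : vlt 0 lambda) (hmu : vlt 0 mu) :
  (* case Omega = {x : 0 <= x <= gamma}, gamma > 0 *)
  (forall gamma : 'cV[R]_n, vlt 0 gamma ->
     has_global_min (fun x : 'cV[R]_n => vle 0 x /\ vle x gamma)
                    (primal_obj A D a lambda)
     /\ has_global_min (fun _ : 'cV[R]_m * 'cV[R]_r => True)
                    (fun yz => dual_obj_box A D a mu gamma yz.1 yz.2))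
  /\
  (* case Omega = R^n_+ *)
  (has_global_min (fun x : 'cV[R]_n => vle 0 x) (primal_obj A D a lambda)
   /\ has_global_min (fun yz : 'cV[R]_m * 'cV[R]_r =>
                        vle 0 (A^T *m yz.1 + D^T *m yz.2))
                    (fun yz => dual_obj_nonneg a mu yz.1 yz.2)).
Proof.
have vltW k (u v : 'cV[R]_k) : vlt u v -> vle u v by move=> lt_uv i; exact: ltW.
have orthant : polyhedral (fun x : 'cV[R]_n => vle 0 x).
  by apply: polyhedral_ext (polyhedral_ge 1%:M 0) => x; rewrite mul1mx.
split; [move=> gamma /vltW gamma_ge0; split | split].
- apply: primal_has_min (vltW _ _ _ hlam); last by split=> // i; rewrite mxE.
  apply: polyhedralI orthant _.
  by apply: polyhedral_ext (polyhedral_le 1%:M gamma) => x; rewrite mul1mx.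
- exact: dual_box_has_min (vltW _ _ _ hmu) gamma_ge0.
- exact: primal_has_min orthant (fun i => lexx _) (vltW _ _ _ hlam).
- exact: dual_nonneg_has_min (vltW _ _ _ hmu).
Qed.
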